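(* Let $T$ be a positive integer, $(\Omega,\mathcal{F},P)$ a probability space, and $\mathbb{F}=(\mathcal{F}_t)_{t=0}^T$, $\mathbb{G}=(\mathcal{G}_t)_{t=0}^T$ two filtrations with $\mathcal{G}_t\subseteq\mathcal{F}_t$ for every $t$. Let $X^2,Y^2$ be real-valued processes $(X^2_t)_{t=0}^T$, $(Y^2_t)_{t=0}^T$ adapted to $\mathbb{G}$ with $E\left(\max_{0\le t\le T}|X^2_t|\right)<\infty$ and $E\left(\max_{0\le t\le T}|Y^2_t|\right)<\infty$. Let $\tau\in\mathcal{T}(\mathbb{F})$ and let $t\in\{0,1,\dots,T-1\}$. Then there exists $\hat{\nu}_t\in\mathcal{T}_t(\mathbb{G})$ such that, $P$-a.s., \begin{align*} &E\left[X^2_{\hat{\nu}_t}\mathbf{1}_{\{\hat{\nu}_t<\tau\}}+Y^2_{\tau}\mathbf{1}_{\{\tau\leq\hat{\nu}_t\}}\,\big|\,\mathcal{G}_t^\tau\right]=\operatorname{ess\,sup}_{\nu\in\mathcal{T}_t(\mathbb{G}^\tau)}E\left[X^2_\nu\mathbf{1}_{\{\nu<\tau\}}+Y^2_{\tau}\mathbf{1}_{\{\tau\leq\nu\}}\,\big|\,\mathcal{G}_t^\tau\right]\\ &=Y^2_\tau\mathbf{1}_{\{\tau\leq t\}}+\mathbf{1}_{\{\tau>t\}}\operatorname{ess\,sup}_{\nu\in\mathcal{T}_t(\mathbb{G})}E_{P|\{\tau>t\}}\left[X^2_\nu\mathbf{1}_{\{\nu<\tau\}}+Y^2_\tau\mathbf{1}_{\{\tau\leq\nu\}}\,\big|\,\mathcal{G}_t\right].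 \end{align*}
   Context: Time is discrete, taking values in $\{0,1,\dots,T\}$. For a filtration $\mathbb{H}$, $\mathcal{T}(\mathbb{H})$ denotes the set of $\mathbb{H}$-stopping times with values in $\{0,\dots,T\}$, and $\mathcal{T}_t(\mathbb{H})$ the set of $\mathbb{H}$-stopping times $\nu$ with $P(t\le\nu\le T)=1$. For $\tau\in\mathcal{T}(\mathbb{F})$, the filtration $\mathbb{G}^\tau=(\mathcal{G}^\tau_t)_{t=0}^T$ is defined by $\mathcal{G}_t^\tau=\mathcal{G}_t\vee\sigma\{\mathbf{1}_{\{\tau\le s\}};0\le s\le t\}$. $E_{P|\{\tau>t\}}[\,\cdot\,|\mathcal{G}_t]$ denotes conditional expectation given $\mathcal{G}_t$ under the conditional probability measure $P(\cdot\mid\tau>t)$; when $P(\tau>t)=0$ the term multiplied by $\mathbf{1}_{\{\tau>t\}}$ is understood to vanish. *)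

From HB Require Import structures.
From mathcomp Require Import all_boot all_order all_algebra.
From mathcomp Require Import all_classical all_reals all_analysis.
From mathcomp Require Import measurable_realfun.
Set Implicit Arguments. Unset Strict Implicit. Unset Printing Implicit Defensive.
Import Order.TTheory GRing.Theory Num.Theory.
Local Open Scope classical_set_scope.
Local Open Scope ring_scope.

Section Defs.
Context {d : measure_display} {Omega : measurableType d} {R : realType}.

Definition sub_sigma (G : set (set Omega)) : Prop :=
  sigma_algebra setT G /\ G `<=` measurable.

Definition filtration (T : nat) (F : nat -> set (set Omega)) : Prop :=
  (forall t, (t <= T)%N -> sub_sigma (F t)) /\
  (forall s t, (s <= t)%N -> (t <= T)%N -> F s `<=` F t).

Definition G_measurable (G : set (set Omega)) (f : Omega -> R) : Prop :=
  forall B : set R, measurable B -> G (f @^-1` B).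

Definition adapted (T : nat) (H : nat -> set (set Omega)) (X : nat -> Omega -> R) :=
  forall t, (t <= T)%N -> G_measurable (H t) (X t).

Definition stopping_time (T : nat) (H : nat -> set (set Omega)) (nu : Omega -> nat) :=
  (forall w, (nu w <= T)%N) /\ (forall s, (s <= T)%N -> H s [set w | (nu w <= s)%N]).

Definition stopping_time_from (P : probability Omega R) (T : nat)
    (H : nat -> set (set Omega)) (t : nat) (nu : Omega -> nat) :=
  stopping_time T H nu /\ {ae P, forall w, (t <= nu w)%N}.

Definition progressive_enlargement (G : nat -> set (set Omega)) (tau : Omega -> nat)
    (t : nat) : set (set Omega) :=
  <<s G t `|` [set [set w | (tau w <= s)%N] | s in [set s | (s <= t)%N]] >>.

(* W is a version of E_{P(.|B)}[Z | G] (for B = setT, of E_P[Z | G]):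
   W is G-measurable, integrable on B, and int_{A /\ B} W dP = int_{A /\ B} Z dP
   for every A in G.  (Multiplying both sides by 1/P(B) this is exactly the
   defining property of the conditional expectation under P(. | B) when
   P(B) > 0; versions under P(.|B) are determined P-a.s. on B only.) *)
Definition cond_exp_on (P : probability Omega R) (B : set Omega)
    (G : set (set Omega)) (Z W : Omega -> R) : Prop :=
  G_measurable G W /\ P.-integrable B (EFin \o W) /\
  forall A, G A ->
    (\int[P]_(x in A `&` B) (W x)%:E = \int[P]_(x in A `&` B) (Z x)%:E)%E.

(* Z is an essential supremum (w.r.t. P(.|B), i.e. P-a.s. on B) of the
   family S of extended-real random variables: Z is measurable, dominates
   every member of S a.s. on B, and is a.s. on B below every measurable
   a.s.-upper bound of S. *)
Definition ess_sup_on (P : probability Omega R) (B : set Omega)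
    (S : set (Omega -> \bar R)) (Z : Omega -> \bar R) : Prop :=
  measurable_fun [set: Omega] (Z : Omega -> \bar R) /\
  (forall V, S V -> {ae P, forall w, B w -> (V w <= Z w)%E}) /\
  (forall Z' : Omega -> \bar R, measurable_fun [set: Omega] Z' ->
     (forall V, S V -> {ae P, forall w, B w -> (V w <= Z' w)%E}) ->
     {ae P, forall w, B w -> (Z w <= Z' w)%E}).

Definition payoff (X Y : nat -> Omega -> R) (tau nu : Omega -> nat) : Omega -> R :=
  fun w => X (nu w) w * ((nu w < tau w)%N)%:R + Y (tau w) w * ((tau w <= nu w)%N)%:R.

Definition maxabs (T : nat) (X : nat -> Omega -> R) : Omega -> R :=
  fun w => \big[Num.max/0]_(i < T.+1) `|X i w|.

End Defs.

From HB Require Import structures.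
From mathcomp Require Import all_boot all_order all_algebra.
From mathcomp Require Import all_classical all_reals all_analysis.
From mathcomp Require Import measurable_realfun.
From mathcomp Require Import lra.
Set Implicit Arguments. Unset Strict Implicit. Unset Printing Implicit Defensive.
Import Order.TTheory GRing.Theory Num.Theory.
Import numFieldNormedType.Exports.
Local Open Scope classical_set_scope.
Local Open Scope ring_scope.

(** An optimal [G]-stopping time from [t] is built by backward induction: at
    time [s] one stops exactly on the positive set of a Hahn decomposition, on
    [G s], of [A |-> \int_A (payoff of stopping at s - payoff of the optimal
    time from s+1)].  Every set of [G^tau t] agrees on [{t < tau}] with a set
    of [G t].  Hence a [G^tau]-stopping time coincides before [tau] with the
    first entry time of a sequence of [G]-adapted sets, a [G]-stopping time with
    the same payoff, so optimality extends from [G]- to [G^tau]-stopping times.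
    Likewise, on [{t < tau}] conditional expectations given [G^tau t] agree
    with those given [G t] under [P(. | t < tau)], while on [{tau <= t}] they
    all equal [Y_tau]; comparing essential suprema yields both identities. *)

Section sigma_algebra_closure.
Context (Omega : pointedType) (K : set (set Omega)).
Hypothesis sK : sigma_algebra setT K.

Let measurableE : (measurable : set (set (g_sigma_algebraType K))) = K.
Proof. exact: measurable_g_measurableTypeE. Qed.

Lemma sigma_algebra_set0 : K set0.
Proof. by rewrite -measurableE; exact: measurable0. Qed.

Lemma sigma_algebra_setT : K setT.
Proof. by rewrite -measurableE; exact: measurableT. Qed.

Lemma sigma_algebra_setC A : K A -> K (~` A).
Proof. by rewrite -measurableE; exact: measurableC. Qed.

Lemma sigma_algebra_setD A B : K A -> K B -> K (A `\` B).
Proof. by rewrite -measurableE; exact: measurableD. Qed.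

Lemma sigma_algebra_setI A B : K A -> K B -> K (A `&` B).
Proof. by rewrite -measurableE; exact: measurableI. Qed.

Lemma sigma_algebra_setU A B : K A -> K B -> K (A `|` B).
Proof. by rewrite -measurableE; exact: measurableU. Qed.

Lemma sigma_algebra_bigcupT (A : nat -> set Omega) : (forall n, K (A n)) ->
  K (\bigcup_n A n).
Proof. by case: sK => _ _; apply. Qed.

Lemma sigma_algebra_preimage_cst (R : Type) (c : R) (B : set R) :
  K ((fun=> c) @^-1` B).
Proof.
have [Bc|Bc] := pselect (B c).
  by rewrite preimage_cst ifT ?inE //; exact: sigma_algebra_setT.
by rewrite preimage_cst ifF ?memNset //; exact: sigma_algebra_set0.
Qed.

Lemma sigma_algebra_eq_of_le (nu : Omega -> nat) s :
  (forall r, (r <= s)%N -> K [set w | (nu w <= r)%N]) ->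
  forall r, (r <= s)%N -> K [set w | nu w = r].
Proof.
move=> nu_le [|r] rs.
  rewrite (_ : [set w | _] = [set w | (nu w <= 0)%N]); first exact: nu_le.
  by apply/seteqP; split => w /=; [move->|rewrite leqn0 => /eqP].
rewrite (_ : [set w | _] = [set w | (nu w <= r.+1)%N] `\` [set w | (nu w <= r)%N]).
  by apply: sigma_algebra_setD; apply: nu_le => //; exact: ltnW.
apply/seteqP; split => w /=; first by move->; rewrite leqnn ltnn.
by move=> [nu_le_r /negP]; rewrite -ltnNge => r_lt_nu; apply/eqP; rewrite eqn_leq nu_le_r.
Qed.

End sigma_algebra_closure.

Section G_measurable.
Context d (Omega : measurableType d) (R : realType).
Implicit Types (H K : set (set Omega)) (f g : Omega -> R).

Lemma G_measurableP H f : sigma_algebra setT H ->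
  G_measurable H f <-> @measurable_fun _ _ (g_sigma_algebraType H) R setT f.
Proof.
move=> sH; split.
- move=> Hf _ Y mY; rewrite setTI.
  by rewrite (measurable_g_measurableTypeE sH); exact: Hf.
- move=> mf Y mY; have := mf (@measurableT _ (g_sigma_algebraType H)) Y mY.
  by rewrite setTI (measurable_g_measurableTypeE sH).
Qed.

Lemma G_measurable_measurable_fun H f :
  H `<=` measurable -> G_measurable H f -> measurable_fun setT f.
Proof. by move=> HM Hf _ Y mY; rewrite setTI; apply: HM; exact: Hf. Qed.

Lemma G_measurableS H K f : H `<=` K -> G_measurable H f -> G_measurable K f.
Proof. by move=> HK Hf Y mY; apply: HK; exact: Hf. Qed.

Lemma G_measurable_lt H f g : sigma_algebra setT H ->
  G_measurable H f -> G_measurable H g -> H [set w | f w < g w].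
Proof.
move=> sH /(G_measurableP _ sH) mf /(G_measurableP _ sH) mg.
have := measurable_funB mg mf.
move=> /(_ (@measurableT _ (g_sigma_algebraType H)) _ (@measurable_itv R `]0, +oo[)).
rewrite setTI (measurable_g_measurableTypeE sH).
by congr H; apply/seteqP; split => w /=; rewrite in_itv/= andbT subr_gt0.
Qed.

Lemma G_measurable_piecewise K (nu : Omega -> nat) (g : nat -> Omega -> R) f :
  sigma_algebra setT K -> (forall w, f w = g (nu w) w) ->
  (forall s (B : set R), measurable B -> K ([set w | nu w = s] `&` g s @^-1` B)) ->
  G_measurable K f.
Proof.
move=> sK fE Kg B mB.
rewrite (_ : f @^-1` B = \bigcup_s ([set w | nu w = s] `&` g s @^-1` B)).
  by apply: sigma_algebra_bigcupT => // s; exact: Kg.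
apply/seteqP; split => w /=; first by rewrite fE => Bw; exists (nu w).
by move=> [s _ [/= <-]]; rewrite /preimage/= fE.
Qed.

End G_measurable.

Section Rintegral_split.
Context d (Omega : measurableType d) (R : realType) (mu : {measure set Omega -> \bar R}).

Lemma EFin_Rintegral D f : measurable D -> mu.-integrable D (EFin \o f) ->
  (\int[mu]_(x in D) f x)%:E = (\int[mu]_(x in D) (f x)%:E)%E.
Proof. by move=> mD intf; rewrite fineK // integrable_fin_num. Qed.

Variables (A C : set Omega).
Hypotheses (mA : measurable A) (mC : measurable C).

Lemma Rintegral_setID f : mu.-integrable setT (EFin \o f) ->
  \int[mu]_(x in A) f x = \int[mu]_(x in A `&` C) f x + \int[mu]_(x in A `\` C) f x.
Proof.
move=> intf; rewrite -Rintegral_setU ?setUIDK //.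
- exact: measurableI.
- exact: measurableD.
- exact: integrableS intf.
- by rewrite disj_set2E; apply/eqP/seteqP; split => x // [[_ ?] [_ ?]].
Qed.

Lemma Rintegral_patch f g :
  mu.-integrable setT (EFin \o f) -> mu.-integrable setT (EFin \o g) ->
  \int[mu]_(x in A `&` C) f x + \int[mu]_(x in A `\` C) g x =
  \int[mu]_(x in A) g x + \int[mu]_(x in A `&` C) (f x - g x).
Proof.
move=> intf intg; have mAC : measurable (A `&` C) by exact: measurableI.
rewrite (Rintegral_setID intg) RintegralB //; [lra|exact: integrableS intf|exact: integrableS intg].
Qed.

End Rintegral_split.

Section sub_sigma_Hahn.
Context d (Omega : measurableType d) (R : realType) (P : probability Omega R).
Variables (H : set (set Omega)) (f : Omega -> R).
Hypotheses (sH : sigma_algebra setT H) (HM : H `<=` measurable)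
  (intf : P.-integrable setT (EFin \o f)).

Let Hty := g_sigma_algebraType H.
Let measurableE : (measurable : set (set Hty)) = H.
Proof. exact: measurable_g_measurableTypeE. Qed.

Let Hcharge (A : set Hty) : \bar R := (\int[P]_(x in A) (f x)%:E)%E.

Let Hcharge0 : Hcharge set0 = 0%E.
Proof. by rewrite /Hcharge integral_set0. Qed.

Let Hcharge_fin (A : set Hty) : measurable A -> Hcharge A \is a fin_num.
Proof.
rewrite measurableE => /HM mA; apply: integrable_fin_num => //.
exact: integrableS intf.
Qed.

Let Hcharge_sigma_additive : semi_sigma_additive Hcharge.
Proof.
move=> A mA tA mU; apply: (@charge_semi_sigma_additive _ _ _ (induced_charge intf)).
- by move=> i; apply: HM; rewrite -measurableE; exact: mA.
- exact: tA.
- by apply: HM; rewrite -measurableE.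
Qed.

HB.instance Definition _ := isCharge.Build _ Hty R Hcharge
  Hcharge0 Hcharge_fin Hcharge_sigma_additive.

Let sub_sigma_Hahn_decomposition : exists D, H D /\
  (forall A, H A -> A `<=` D -> 0 <= \int[P]_(x in A) f x) /\
  (forall A, H A -> A `<=` ~` D -> \int[P]_(x in A) f x <= 0).
Proof.
have [D [N [[mD posD] [mN negN] DN _]]] := Hahn_decomposition Hcharge.
exists D; split; first by rewrite -measurableE.
split => [A HA AD|A HA AD].
  by rewrite fine_ge0// (posD A) // measurableE.
rewrite fine_le0// (negN A) ?measurableE // => x Ax.
have : (D `|` N) x by rewrite DN.
by case=> // /[dup] Dx; have := AD x Ax.
Qed.

Lemma sub_sigma_Rintegral_argmax : exists D, H D /\
  forall A E, H A -> H E -> \int[P]_(x in A `&` E) f x <= \int[P]_(x in A `&` D) f x.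
Proof.
have [D [HD [posD negD]]] := sub_sigma_Hahn_decomposition.
exists D; split => // A E HA HE.
have HAE := sigma_algebra_setI sH HA HE; have HAD := sigma_algebra_setI sH HA HD.
have mAE := HM HAE; have mAD := HM HAD; have mD := HM HD; have mE := HM HE.
rewrite (Rintegral_setID mAE mD intf) (Rintegral_setID mAD mE intf).
have -> : A `&` D `&` E = A `&` E `&` D by rewrite setIAC.
have : \int[P]_(x in A `&` E `\` D) f x <= 0.
  by apply: negD; [exact: sigma_algebra_setD|move=> x [] _].
have : 0 <= \int[P]_(x in A `&` D `\` E) f x.
  by apply: posD; [exact: sigma_algebra_setD|move=> x [[]]].
lra.
Qed.

End sub_sigma_Hahn.

Section conditional_integral_uniqueness.
Context d (Omega : measurableType d) (R : realType) (P : probability Omega R).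
Variables (H : set (set Omega)) (C : set Omega) (f g : Omega -> R).
Hypotheses (sH : sigma_algebra setT H) (HM : H `<=` measurable) (mC : measurable C)
  (Hf : G_measurable H f) (Hg : G_measurable H g)
  (intf : P.-integrable C (EFin \o f)) (intg : P.-integrable C (EFin \o g)).

Lemma ae_le_of_integral_le :
  (forall A, H A ->
     (\int[P]_(x in A `&` C) (f x)%:E <= \int[P]_(x in A `&` C) (g x)%:E)%E) ->
  {ae P, forall w, C w -> f w <= g w}.
Proof.
move=> fg; set E := [set w | g w < f w].
have HE : H E := G_measurable_lt sH Hg Hf.
have mEC : measurable (E `&` C) by apply: measurableI => //; exact: HM.
have intfE : P.-integrable (E `&` C) (EFin \o f) by apply: integrableS intf.
have intgE : P.-integrable (E `&` C) (EFin \o g) by apply: integrableS intg.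
have int_le0 : (\int[P]_(x in E `&` C) ((f x)%:E - (g x)%:E) <= 0)%E.
  by rewrite integralB_EFin // sube_le0; exact: fg.
have int_abs0 : (\int[P]_(x in E `&` C) `|(f x - g x)%:E| = 0)%E.
  apply/eqP; rewrite eq_le integral_ge0 ?andbT //; apply: le_trans int_le0.
  rewrite le_eqVlt; apply/orP; left; apply/eqP/eq_integral => x /set_mem [Ex _].
  by rewrite gee0_abs ?EFinB // lee_fin subr_ge0 ltW.
have mfg : measurable_fun (E `&` C) (EFin \o (f \- g)).
  apply/measurable_EFinP; apply: measurable_funB.
  - by apply/measurable_EFinP; exact: (measurable_int _ intfE).
  - by apply/measurable_EFinP; exact: (measurable_int _ intgE).
have := (ae_eq_integral_abs P mEC mfg).1 int_abs0.
apply: filterS => w /= fg0 Cw; rewrite leNgt; apply/negP => gf.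
move: (fg0 (conj gf Cw)); rewrite /cst => /eqP; rewrite eqe subr_eq0 => /eqP fgw.
by move: gf; rewrite fgw ltxx.
Qed.

End conditional_integral_uniqueness.

Lemma ae_eq_of_integral_eq d (Omega : measurableType d) (R : realType)
    (P : probability Omega R) (H : set (set Omega)) (C : set Omega) (f g : Omega -> R) :
  sigma_algebra setT H -> H `<=` measurable -> measurable C ->
  G_measurable H f -> G_measurable H g ->
  P.-integrable C (EFin \o f) -> P.-integrable C (EFin \o g) ->
  (forall A, H A ->
     (\int[P]_(x in A `&` C) (f x)%:E = \int[P]_(x in A `&` C) (g x)%:E)%E) ->
  {ae P, forall w, C w -> f w = g w}.
Proof.
move=> sH HM mC Hf Hg intf intg fg.
have f_le_g : {ae P, forall w, C w -> f w <= g w}.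
  by apply: (ae_le_of_integral_le sH HM mC Hf Hg intf intg) => A HA; rewrite fg.
have g_le_f : {ae P, forall w, C w -> g w <= f w}.
  by apply: (ae_le_of_integral_le sH HM mC Hg Hf intg intf) => A HA; rewrite fg.
by apply: filterS2 f_le_g g_le_f => w fg' gf' Cw; apply/le_anti; rewrite fg' ?gf'.
Qed.

Section stopping_time_measurability.
Context d (Omega : measurableType d) (R : realType).
Variable T : nat.
Implicit Types (H : nat -> set (set Omega)) (nu tau : Omega -> nat).

Lemma measurable_stopping_time_eq H nu :
  filtration T H -> stopping_time T H nu -> forall s, measurable [set w | nu w = s].
Proof.
move=> [subH _] [nuT Hnu] s; have [sT|Ts] := leqP s T.
  apply: (sigma_algebra_eq_of_le (@sigma_algebra_measurable _ Omega) _ sT) => r rT.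
  by have [_ HM] := subH r rT; apply/HM/Hnu.
rewrite (_ : [set w | _] = set0) //; apply/seteqP; split => w //= nuw.
by move: (nuT w); rewrite nuw leqNgt Ts.
Qed.

Lemma measurable_fun_piecewise nu (g : nat -> Omega -> R) (f : Omega -> R) :
  (forall w, (nu w <= T)%N) -> (forall s, measurable [set w | nu w = s]) ->
  (forall w, f w = g (nu w) w) ->
  (forall s, (s <= T)%N -> measurable_fun setT (g s)) ->
  measurable_fun setT f.
Proof.
move=> nuT mnu fE mg; apply: (@G_measurable_measurable_fun _ _ _ measurable) => //.
apply: (G_measurable_piecewise (@sigma_algebra_measurable _ Omega) fE) => s B mB.
have [sT|Ts] := leqP s T.
  by apply: measurableI => //; rewrite -[_ @^-1` _]setTI; exact: mg.
rewrite (_ : _ `&` _ = set0) //; apply/seteqP; split => w //= [nuw _].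
by move: (nuT w); rewrite nuw leqNgt Ts.
Qed.

Variables (X Y : nat -> Omega -> R).

Lemma measurable_payoff tau nu :
  (forall w, (tau w <= T)%N) -> (forall s, measurable [set w | tau w = s]) ->
  (forall w, (nu w <= T)%N) -> (forall s, measurable [set w | nu w = s]) ->
  (forall s, (s <= T)%N -> measurable_fun setT (X s)) ->
  (forall s, (s <= T)%N -> measurable_fun setT (Y s)) ->
  measurable_fun setT (payoff X Y tau nu).
Proof.
move=> tauT mtau nuT mnu mX mY.
pose stop_at s w := X s w * ((s < tau w)%N)%:R + Y (tau w) w * ((tau w <= s)%N)%:R.
apply: (measurable_fun_piecewise (nu := nu) (g := stop_at)) => // s sT.
pose stop_at_before s r w := X s w * ((s < r)%N)%:R + Y r w * ((r <= s)%N)%:R.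
apply: (measurable_fun_piecewise (nu := tau) (g := stop_at_before s)) => // r rT.
by apply: measurable_funD; apply: measurable_funM => //; [exact: mX|exact: mY].
Qed.

End stopping_time_measurability.

Section payoff.
Context d (Omega : measurableType d) (R : realType) (P : probability Omega R).
Variables (T : nat) (X Y : nat -> Omega -> R) (tau nu : Omega -> nat).

Lemma payoff_after_tau w : (tau w <= nu w)%N -> payoff X Y tau nu w = Y (tau w) w.
Proof. by move=> tau_nu; rewrite /payoff ltnNge tau_nu /= mulr0 add0r mulr1. Qed.

Lemma le_maxabs (Z : nat -> Omega -> R) s w : (s <= T)%N -> `|Z s w| <= maxabs T Z w.
Proof. by move=> sT; exact: (@le_bigmax _ _ _ 0 _ (Ordinal (sT : (s < T.+1)%N))). Qed.

Lemma maxabs_ge0 (Z : nat -> Omega -> R) w : 0 <= maxabs T Z w.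
Proof. exact: le_trans (le_maxabs Z w (leq0n T)). Qed.

Hypotheses (tauT : forall w, (tau w <= T)%N) (nuT : forall w, (nu w <= T)%N).

Lemma normr_payoff_le w : `|payoff X Y tau nu w| <= maxabs T X w + maxabs T Y w.
Proof.
rewrite /payoff; case: ltnP => _.
  rewrite mulr1 mulr0 addr0 (le_trans (le_maxabs X w (nuT w))) //.
  by rewrite lerDl maxabs_ge0.
rewrite mulr0 mulr1 add0r (le_trans (le_maxabs Y w (tauT w))) //.
by rewrite lerDr maxabs_ge0.
Qed.

Lemma integrable_payoff :
  (forall s, measurable [set w | tau w = s]) -> (forall s, measurable [set w | nu w = s]) ->
  (forall s, (s <= T)%N -> measurable_fun setT (X s)) ->
  (forall s, (s <= T)%N -> measurable_fun setT (Y s)) ->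
  P.-integrable setT (EFin \o maxabs T X) -> P.-integrable setT (EFin \o maxabs T Y) ->
  P.-integrable setT (EFin \o payoff X Y tau nu).
Proof.
move=> mtau mnu mX mY iX iY.
have iXY : P.-integrable setT (EFin \o (maxabs T X \+ maxabs T Y)).
  by rewrite (_ : _ \o _ = (EFin \o maxabs T X) \+ (EFin \o maxabs T Y))%E;
    [exact: integrableD|apply/funext => w /=; rewrite EFinD].
apply: (le_integrable measurableT _ _ iXY).
  by apply/measurable_EFinP; exact: measurable_payoff.
by move=> w _ /=; rewrite lee_fin (le_trans (normr_payoff_le w)) ?ler_norm.
Qed.

End payoff.

Section progressive_enlargement.
Context d (Omega : measurableType d).
Variables (G : nat -> set (set Omega)) (tau : Omega -> nat).
Local Notation Gtau := (progressive_enlargement G tau).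

Lemma progressive_enlargement_sigma_algebra s : sigma_algebra setT (Gtau s).
Proof. exact: smallest_sigma_algebra. Qed.

Lemma sub_progressive_enlargement s : G s `<=` Gtau s.
Proof. by move=> A GA; apply: sub_sigma_algebra; left. Qed.

Lemma progressive_enlargement_tau_le s r : (r <= s)%N -> Gtau s [set w | (tau w <= r)%N].
Proof. by move=> rs; apply: sub_sigma_algebra; right; exists r. Qed.

Lemma progressive_enlargement_mono s s' : (s <= s')%N -> G s `<=` G s' ->
  Gtau s `<=` Gtau s'.
Proof.
move=> ss' GG; apply: sub_sigma_algebra2 => A [GA|[r /= rs <-]]; first by left; exact: GG.
by right; exists r => //=; exact: leq_trans ss'.
Qed.

Lemma progressive_enlargement_measurable s :
  (forall r, (r <= s)%N -> measurable [set w | (tau w <= r)%N]) ->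
  G s `<=` measurable -> Gtau s `<=` measurable.
Proof.
move=> mtau GM; apply: smallest_sub; first exact: sigma_algebra_measurable.
by move=> A [GA|[r /= rs <-]]; [exact: GM|exact: mtau].
Qed.

(** The sets with this property form a sigma-algebra containing the generators
    of [Gtau s]. *)
Lemma progressive_enlargement_trace s : sigma_algebra setT (G s) ->
  forall C, Gtau s C ->
  exists2 A, G s A & C `&` [set w | (s < tau w)%N] = A `&` [set w | (s < tau w)%N].
Proof.
move=> sG; set B := [set w | (s < tau w)%N].
apply: smallest_sub => [|C [GC|[r /= rs <-]]]; last 2 first.
- by exists C.
- exists set0; first exact: sigma_algebra_set0.
  rewrite set0I; apply/seteqP; split => w // [/= tau_r s_tau].
  by have := leq_ltn_trans tau_r (leq_ltn_trans rs s_tau); rewrite ltnn.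
split.
- by exists set0; first exact: sigma_algebra_set0.
- move=> C [A GA CA]; exists (setT `\` A).
    exact: sigma_algebra_setD (sigma_algebra_setT sG) GA.
  rewrite !setTD; apply/seteqP; split => w [Cw Bw]; split => //.
    by move=> Aw; apply: Cw; have [] : (C `&` B) w by rewrite CA.
  by move=> Cw'; apply: Cw; have [] : (A `&` B) w by rewrite -CA.
- move=> C traceC.
  have /choice[A GA_CA] : forall n, exists A, G s A /\ C n `&` B = A `&` B.
    by move=> n; have [A] := traceC n; exists A.
  exists (\bigcup_n A n); first by apply: sigma_algebra_bigcupT => // n; case: (GA_CA n).
  by rewrite !setI_bigcupl; apply: eq_bigcupr => n _; case: (GA_CA n).
Qed.

End progressive_enlargement.

Section filtration.
Context d (Omega : measurableType d) (T : nat) (G : nat -> set (set Omega)).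
Hypothesis filtG : filtration T G.

Lemma filtration_sigma_algebra s : (s <= T)%N -> sigma_algebra setT (G s).
Proof. by move=> sT; case: (filtG.1 s sT). Qed.

Lemma filtration_measurable s : (s <= T)%N -> G s `<=` measurable.
Proof. by move=> sT; case: (filtG.1 s sT). Qed.

Lemma filtration_mono r s : (r <= s)%N -> (s <= T)%N -> G r `<=` G s.
Proof. exact: filtG.2. Qed.

End filtration.

Section optimal_stopping.
Context d (Omega : measurableType d) (R : realType) (P : probability Omega R).
Variables (T : nat) (G : nat -> set (set Omega)) (X Y : nat -> Omega -> R)
  (tau : Omega -> nat).
Hypotheses (filtG : filtration T G) (adaptX : adapted T G X) (adaptY : adapted T G Y)
  (intX : P.-integrable setT (EFin \o maxabs T X))
  (intY : P.-integrable setT (EFin \o maxabs T Y))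
  (tauT : forall w, (tau w <= T)%N) (mtau : forall s, measurable [set w | tau w = s]).

Local Notation pay := (payoff X Y tau).

Definition stopping_time_ge s (nu : Omega -> nat) :=
  stopping_time T G nu /\ forall w, (s <= nu w)%N.

Definition optimal_from s (nu : Omega -> nat) := forall mu, stopping_time_ge s mu ->
  forall A, G s A -> \int[P]_(x in A) pay mu x <= \int[P]_(x in A) pay nu x.

Lemma integrable_stopping_payoff nu : stopping_time T G nu ->
  P.-integrable setT (EFin \o pay nu).
Proof.
move=> nu_st; apply: integrable_payoff => //; first by case: nu_st.
- exact: measurable_stopping_time_eq filtG nu_st.
- by move=> s sT; exact: G_measurable_measurable_fun (filtration_measurable filtG sT) (adaptX sT).
- by move=> s sT; exact: G_measurable_measurable_fun (filtration_measurable filtG sT) (adaptY sT).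
Qed.

Lemma stopping_time_cst s : (s <= T)%N -> stopping_time T G (fun=> s).
Proof.
move=> sT; split => // r rT; have sG := filtration_sigma_algebra filtG rT.
have [sr|rs] := leqP s r.
  by rewrite (_ : [set w | _] = setT); [exact: sigma_algebra_setT sG|apply/seteqP].
by rewrite (_ : [set w | _] = set0); [exact: sigma_algebra_set0 sG|
  apply/seteqP; split => w //=; rewrite leqNgt rs].
Qed.

Lemma optimal_from_T : stopping_time_ge T (fun=> T) /\ optimal_from T (fun=> T).
Proof.
split; first by split; [exact: stopping_time_cst|].
move=> mu [[muT _] mu_ge] A GA.
suff -> : \int[P]_(x in A) pay mu x = \int[P]_(x in A) pay (fun=> T) x by [].
apply: eq_Rintegral => w _; rewrite /payoff.
by have -> : mu w = T by apply/eqP; rewrite eqn_leq muT mu_ge.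
Qed.

Section step.
Variables (s : nat) (nu' : Omega -> nat).
Hypotheses (sT : (s < T)%N) (nu'_ge : stopping_time_ge s.+1 nu').

Lemma stopping_time_ge_glue D : G s D ->
  stopping_time_ge s (fun w => if `[< D w >] then s else nu' w).
Proof.
move=> GD; have [[nu'T Gnu'] nu'_gt] := nu'_ge.
split=> [|w]; last by case: ifP => // _; exact: ltnW.
split=> [w|r rT]; first by case: ifP => // _; exact: ltnW.
have sG := filtration_sigma_algebra filtG rT.
have [sr|rs] := leqP s r.
  rewrite (_ : [set w | _] = D `|` [set w | (nu' w <= r)%N]).
    by apply: (sigma_algebra_setU sG); [exact: (filtration_mono filtG sr rT GD)|exact: Gnu'].
  apply/seteqP; split => w /=; case: asboolP => Dw; by [left|right|case|].
rewrite (_ : [set w | _] = set0); first exact: sigma_algebra_set0 sG.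
apply/seteqP; split => w //=; case: ifP => _; first by rewrite leqNgt rs.
by move=> /(leq_trans (nu'_gt w)); rewrite ltnNge (ltnW rs).
Qed.

Lemma stopping_time_ge_maxn mu : stopping_time T G mu ->
  stopping_time_ge s.+1 (fun w => maxn (mu w) s.+1).
Proof.
move=> [muT Gmu]; split=> [|w]; last by rewrite leq_maxr.
split=> [w|r rT]; first by rewrite geq_max muT.
have [sr|rs] := leqP s.+1 r.
  rewrite (_ : [set w | _] = [set w | (mu w <= r)%N]); first exact: Gmu.
  by apply/seteqP; split => w /=; rewrite geq_max sr andbT.
rewrite (_ : [set w | _] = set0).
  exact: sigma_algebra_set0 (filtration_sigma_algebra filtG rT).
by apply/seteqP; split => w //=; rewrite geq_max [(s.+1 <= r)%N]leqNgt rs andbF.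
Qed.

Let sT' := ltnW sT.
Let int_now := integrable_stopping_payoff (stopping_time_cst sT').
Let int_nu' := integrable_stopping_payoff nu'_ge.1.

Lemma Rintegral_payoff_glue D A : G s D -> G s A ->
  \int[P]_(x in A) pay (fun w => if `[< D w >] then s else nu' w) x =
  \int[P]_(x in A) pay nu' x + \int[P]_(x in A `&` D) (pay (fun=> s) x - pay nu' x).
Proof.
move=> GD GA; have mA := filtration_measurable filtG sT' GA.
have mD := filtration_measurable filtG sT' GD.
rewrite -Rintegral_patch // (Rintegral_setID mA mD).
  by congr (_ + _); apply: eq_Rintegral => w /set_mem [_ Dw]; rewrite /payoff; case: asboolP.
exact: integrable_stopping_payoff (stopping_time_ge_glue GD).1.
Qed.

Hypothesis nu'_opt : optimal_from s.+1 nu'.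

Lemma Rintegral_payoff_le mu A : stopping_time_ge s mu -> G s A ->
  \int[P]_(x in A) pay mu x <= \int[P]_(x in A) pay nu' x +
    \int[P]_(x in A `&` [set w | (mu w <= s)%N]) (pay (fun=> s) x - pay nu' x).
Proof.
move=> [mu_st mu_ge] GA; set E := [set w | (mu w <= s)%N].
have GE : G s E := mu_st.2 s sT'.
have mA := filtration_measurable filtG sT' GA; have mE := filtration_measurable filtG sT' GE.
rewrite -Rintegral_patch // (Rintegral_setID mA mE); last exact: integrable_stopping_payoff.
have -> : \int[P]_(x in A `&` E) pay mu x = \int[P]_(x in A `&` E) pay (fun=> s) x.
  apply: eq_Rintegral => w /set_mem [_ /= mu_s]; rewrite /payoff.
  by have -> : mu w = s by apply/eqP; rewrite eqn_leq mu_s mu_ge.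
have -> : \int[P]_(x in A `\` E) pay mu x =
    \int[P]_(x in A `\` E) pay (fun w => maxn (mu w) s.+1) x.
  by apply: eq_Rintegral => w /set_mem [_ /negP]; rewrite -ltnNge /payoff => /maxn_idPl ->.
rewrite lerD2l; apply: (nu'_opt (stopping_time_ge_maxn mu_st)).
apply: (filtration_mono filtG (leqnSn s) sT).
exact: (sigma_algebra_setD (filtration_sigma_algebra filtG sT') GA GE).
Qed.

Lemma optimal_step : exists nu, stopping_time_ge s nu /\ optimal_from s nu.
Proof.
have [D [GD D_max]] := sub_sigma_Rintegral_argmax (filtration_sigma_algebra filtG sT')
  (filtration_measurable filtG sT') (integrableB measurableT int_now int_nu').
exists (fun w => if `[< D w >] then s else nu' w); split; first exact: stopping_time_ge_glue.
move=> mu mu_ge A GA; rewrite Rintegral_payoff_glue //.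
apply: le_trans (Rintegral_payoff_le mu_ge GA) _; rewrite lerD2l.
exact: D_max GA (mu_ge.1.2 s sT').
Qed.

End step.

Lemma exists_optimal s : (s <= T)%N -> exists nu, stopping_time_ge s nu /\ optimal_from s nu.
Proof.
move=> sT; rewrite -(subKn sT); move: (leq_subr s T).
elim: (T - s)%N => [|k IH kT]; first by rewrite subn0; exists (fun=> T); exact: optimal_from_T.
have [nu' [nu'_ge nu'_opt]] := IH (ltnW kT).
rewrite -subnSK // in nu'_ge nu'_opt.
apply: optimal_step nu'_ge nu'_opt.
by rewrite ltn_subrL (leq_ltn_trans (leq0n k) kT).
Qed.
End optimal_stopping.

Section first_entry.
Context (Omega : Type) (T t : nat) (A : nat -> set Omega).

Definition entered (w : Omega) : pred nat :=
  fun k => (k == T) || [&& (t <= k)%N, (k <= T)%N & `[< A k w >]].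

Let entered_T w : exists k, entered w k.
Proof. by exists T; rewrite /entered eqxx. Qed.

Definition first_entry (w : Omega) : nat := ex_minn (entered_T w).

Lemma first_entry_leP w k :
  reflect (exists2 j, (j <= k)%N & entered w j) (first_entry w <= k)%N.
Proof.
rewrite /first_entry; case: ex_minnP => m entered_m m_min; apply: (iffP idP).
  by move=> mk; exists m.
by move=> [j jk /m_min mj]; exact: leq_trans mj jk.
Qed.

Lemma first_entry_entered w : entered w (first_entry w).
Proof. by rewrite /first_entry; case: ex_minnP. Qed.

Lemma first_entry_leT w : (first_entry w <= T)%N.
Proof. by apply/first_entry_leP; exists T; rewrite // /entered eqxx. Qed.

Lemma first_entry_ge w : (t <= T)%N -> (t <= first_entry w)%N.
Proof.
by move=> tT; have /orP[/eqP ->|/and3P[]] := first_entry_entered w.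
Qed.

End first_entry.

Section first_entry_stopping_time.
Context d (Omega : measurableType d) (T t : nat) (G : nat -> set (set Omega)).
Variable A : nat -> set Omega.
Hypotheses (filtG : filtration T G) (GA : forall j, (t <= j <= T)%N -> G j (A j)).

Lemma stopping_time_first_entry : stopping_time T G (first_entry T t A).
Proof.
split=> [|r rT]; first exact: first_entry_leT.
have sG := filtration_sigma_algebra filtG rT.
have [rT_eq|rT'] := eqVneq r T.
  rewrite (_ : [set w | _] = setT); first exact: sigma_algebra_setT sG.
  by apply/seteqP; split => w // _ /=; rewrite rT_eq; exact: first_entry_leT.
rewrite (_ : [set w | _] = \bigcup_j (if (t <= j <= r)%N then A j else set0)).
  apply: sigma_algebra_bigcupT => // j; case: ifPn => [/andP[tj jr]|_].
    by apply: (filtration_mono filtG jr rT); apply: GA; rewrite tj (leq_trans jr rT).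
  exact: sigma_algebra_set0 sG.
apply/seteqP; split => w /=.
  move/first_entry_leP => [j jr /orP[/eqP jT|/and3P[tj _ /asboolP Ajw]]].
    by move: rT'; rewrite eqn_leq rT -jT jr.
  by exists j; rewrite //= tj jr.
move=> [j _]; case: ifPn => [/andP[tj jr] Ajw|//].
apply/first_entry_leP; exists j => //; apply/orP; right.
by rewrite tj (leq_trans jr rT); apply/asboolP.
Qed.

End first_entry_stopping_time.

Section payoff_first_entry.
Context d (Omega : measurableType d) (R : realType) (T t : nat) (X Y : nat -> Omega -> R).
Variables (tau nu : Omega -> nat) (A : nat -> set Omega).
Hypothesis A_nu : forall w r, (t <= r)%N -> (r < tau w)%N -> A r w <-> (nu w <= r)%N.

Lemma payoff_first_entry w : (t <= nu w)%N -> (nu w <= T)%N ->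
  payoff X Y tau nu w = payoff X Y tau (first_entry T t A) w.
Proof.
move=> t_nu nuT; have tT := leq_trans t_nu nuT.
have min_le : (minn (nu w) (tau w) <= first_entry T t A w)%N.
  have /orP[/eqP ->|/and3P[tm _ /asboolP Am]] := first_entry_entered T t A w.
    by rewrite geq_min nuT.
  have [m_tau|tau_m] := ltnP (first_entry T t A w) (tau w).
    by rewrite geq_min (A_nu tm m_tau).1.
  by rewrite geq_min tau_m orbT.
have [nu_tau|tau_nu] := ltnP (nu w) (tau w).
  rewrite /payoff; suff -> : first_entry T t A w = nu w by [].
  apply/eqP; rewrite eqn_leq -{2}(minn_idPl (ltnW nu_tau)) min_le andbT.
  apply/first_entry_leP; exists (nu w) => //; apply/orP; right.
  by rewrite t_nu nuT; apply/asboolP/(A_nu t_nu nu_tau).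
rewrite !payoff_after_tau //; move: min_le.
by rewrite (minn_idPr tau_nu).
Qed.

End payoff_first_entry.

Section cond_exp_on.
Context d (Omega : measurableType d) (R : realType) (P : probability Omega R).
Variables (H : set (set Omega)) (C : set Omega).
Hypotheses (sH : sigma_algebra setT H) (HM : H `<=` measurable).

Lemma cond_exp_on_unique (Z V V' : Omega -> R) : measurable C ->
  cond_exp_on P C H Z V -> cond_exp_on P C H Z V' -> {ae P, forall w, C w -> V w = V' w}.
Proof.
move=> mC [HV [iV eV]] [HV' [iV' eV']].
by apply: (ae_eq_of_integral_eq sH HM mC HV HV' iV iV') => A HA; rewrite eV // eV'.
Qed.

Lemma cond_exp_on_setI (Z V : Omega -> R) : H C ->
  cond_exp_on P setT H Z V -> cond_exp_on P C H Z V.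
Proof.
move=> HC [HV [iV eV]]; split; first exact: HV.
split; first by apply: integrableS iV => //; exact: HM.
by move=> A HA; rewrite -[A `&` C]setIT eV //; exact: sigma_algebra_setI.
Qed.

Lemma cond_exp_on_ae_eq (Z Z' V : Omega -> R) : measurable C ->
  measurable_fun setT Z -> measurable_fun setT Z' ->
  {ae P, forall w, C w -> Z w = Z' w} ->
  cond_exp_on P C H Z V -> cond_exp_on P C H Z' V.
Proof.
move=> mC mZ mZ' ZZ' [HV [iV eV]]; split; first exact: HV.
split=> // A HA; rewrite eV //; have mAC := measurableI _ _ (HM HA) mC.
apply: ae_eq_integral => //; [apply: measurable_funTS|apply: measurable_funTS|];
  [exact/measurable_EFinP|exact/measurable_EFinP|].
by apply: filterS ZZ' => w ZZ'w [_ /ZZ'w ->].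
Qed.

End cond_exp_on.

Section enlargement.
Context d (Omega : measurableType d) (R : realType) (P : probability Omega R).
Variables (T : nat) (F G : nat -> set (set Omega)) (X Y : nat -> Omega -> R)
  (tau : Omega -> nat) (t : nat).
Hypotheses (filtF : filtration T F) (filtG : filtration T G)
  (adaptX : adapted T G X) (adaptY : adapted T G Y)
  (intX : P.-integrable setT (EFin \o maxabs T X))
  (intY : P.-integrable setT (EFin \o maxabs T Y))
  (tau_st : stopping_time T F tau) (tT : (t < T)%N).

Local Notation Gtau := (progressive_enlargement G tau).
Local Notation pay := (payoff X Y tau).
Local Notation B := [set w | (t < tau w)%N].
Local Notation Bc := [set w | (tau w <= t)%N].

Let tauT w : (tau w <= T)%N. Proof. exact: tau_st.1. Qed.

Let measurable_tau_le r : (r <= T)%N -> measurable [set w | (tau w <= r)%N].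
Proof. by move=> rT; apply: (filtration_measurable filtF rT); exact: tau_st.2. Qed.

Let measurable_tau_eq : forall s, measurable [set w | tau w = s].
Proof. exact: measurable_stopping_time_eq filtF tau_st. Qed.

Lemma filtration_progressive_enlargement : filtration T Gtau.
Proof.
split=> [s sT|r s rs sT].
  split; first exact: progressive_enlargement_sigma_algebra.
  apply: progressive_enlargement_measurable; last exact: (filtration_measurable filtG sT).
  by move=> r rs; apply: measurable_tau_le; exact: leq_trans sT.
exact: progressive_enlargement_mono rs (filtration_mono filtG rs sT).
Qed.

Let sGt : sigma_algebra setT (Gtau t).
Proof. exact: progressive_enlargement_sigma_algebra. Qed.

Let Gt_measurable : Gtau t `<=` measurable.
Proof. exact: (filtration_measurable filtration_progressive_enlargement (ltnW tT)). Qed.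

Lemma stopping_time_progressive_enlargement nu :
  stopping_time T G nu -> stopping_time T Gtau nu.
Proof. by case=> nuT Gnu; split => // s sT; apply: sub_progressive_enlargement; exact: Gnu. Qed.

Lemma measurable_payoff_progressive_enlargement nu :
  stopping_time T Gtau nu -> measurable_fun setT (pay nu).
Proof.
move=> nu_st; apply: measurable_payoff => //; first by case: nu_st.
- exact: measurable_stopping_time_eq filtration_progressive_enlargement nu_st.
- by move=> s sT; exact: G_measurable_measurable_fun (filtration_measurable filtG sT) (adaptX sT).
- by move=> s sT; exact: G_measurable_measurable_fun (filtration_measurable filtG sT) (adaptY sT).
Qed.

Lemma stopping_time_from_ge nu : stopping_time_ge T G t nu -> stopping_time_from P T G t nu.
Proof. by case=> nu_st nu_ge; split => //; exact: aeW. Qed.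

Lemma stopping_time_from_progressive_enlargement nu :
  stopping_time_from P T G t nu -> stopping_time_from P T Gtau t nu.
Proof. by case=> nu_st nu_ge; split => //; exact: stopping_time_progressive_enlargement. Qed.

(** The witness is the first entry time of the traces in [G] of the sets [{nu <= r}]. *)
Lemma stopping_time_from_reduce nu : stopping_time_from P T Gtau t nu ->
  exists nu', stopping_time_ge T G t nu' /\ {ae P, forall w, pay nu w = pay nu' w}.
Proof.
move=> [[nuT Gnu] t_nu].
have /choice[A A_nu] : forall r, exists A, (r <= T)%N -> G r A /\
    [set w | (nu w <= r)%N] `&` [set w | (r < tau w)%N] = A `&` [set w | (r < tau w)%N].
  move=> r; have [rT|] := leqP r T; last by exists set0.
  have [A GA eqA] := progressive_enlargement_trace (filtration_sigma_algebra filtG rT) (Gnu r rT).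
  by exists A.
have A_nu' w r : (t <= r)%N -> (r < tau w)%N -> A r w <-> (nu w <= r)%N.
  move=> _ r_tau; have [_ eqA] := A_nu r (ltnW (leq_trans r_tau (tauT w))).
  split=> [Arw|nu_r].
    by have [] : ([set w | (nu w <= r)%N] `&` [set w | (r < tau w)%N]) w by rewrite eqA.
  by have [] : (A r `&` [set w | (r < tau w)%N]) w by rewrite -eqA.
exists (first_entry T t A); split.
  split=> [|w]; last exact: first_entry_ge (ltnW tT).
  by apply: stopping_time_first_entry => // j /andP[_ jT]; case: (A_nu j jT).
by apply: filterS t_nu => w t_nu_w; rewrite (payoff_first_entry X Y A_nu' t_nu_w (nuT w)).
Qed.

Lemma progressive_enlargement_before : Gtau t B.
Proof.
rewrite (_ : B = ~` Bc).
  by apply: (sigma_algebra_setC sGt); exact: progressive_enlargement_tau_le.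
by apply/seteqP; split => w /=; rewrite ltnNge => /negP.
Qed.

Definition Ystop w := Y (tau w) w * ((tau w <= t)%N)%:R.

(** [Ystop] is read off at [minn tau t.+1], whose level sets, unlike those of [tau],
    all lie in [Gtau t]. *)
Lemma G_measurable_Ystop : G_measurable (Gtau t) Ystop.
Proof.
pose Y_upto s := if (s <= t)%N then Y s else fun=> 0.
apply: (G_measurable_piecewise (nu := fun w => minn (tau w) t.+1) (g := Y_upto) sGt).
  move=> w; rewrite /Ystop /Y_upto /minn ltnS; case: leqP => [tau_t|t_tau].
    by rewrite tau_t mulr1.
  by rewrite ltnn mulr0.
move=> s B' mB'; apply: (sigma_algebra_setI sGt).
  apply: (sigma_algebra_eq_of_le sGt _ (leqnn s)) => r _.
  have [rt|tr] := leqP r t.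
    rewrite (_ : [set w | _] = [set w | (tau w <= r)%N]).
      exact: (progressive_enlargement_tau_le (G := G) (tau := tau) rt).
    by apply/seteqP; split => w /=; rewrite geq_min [(t < r)%N]ltnNge rt orbF.
  rewrite (_ : [set w | _] = setT); first exact: sigma_algebra_setT sGt.
  by apply/seteqP; split => w // _ /=; rewrite geq_min tr orbT.
rewrite /Y_upto; case: leqP => [st|_]; last exact: (sigma_algebra_preimage_cst sGt).
apply: (sub_progressive_enlargement (tau := tau)); apply: (filtration_mono filtG st (ltnW tT)).
exact: adaptY (leq_trans st (ltnW tT)) _ mB'.
Qed.

Lemma measurable_Ystop : measurable_fun setT Ystop.
Proof. exact: G_measurable_measurable_fun Gt_measurable G_measurable_Ystop. Qed.

Lemma integrable_Ystop : P.-integrable setT (EFin \o Ystop).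
Proof.
apply: (le_integrable measurableT _ _ intY); first exact/measurable_EFinP/measurable_Ystop.
move=> w _ /=; rewrite lee_fin (ger0_norm (maxabs_ge0 _ _ _)) /Ystop.
case: leqP => _; last by rewrite mulr0 normr0 maxabs_ge0.
by rewrite mulr1 le_maxabs.
Qed.

Lemma cond_exp_on_after_tau nu V : stopping_time_from P T Gtau t nu ->
  cond_exp_on P setT (Gtau t) (pay nu) V -> {ae P, forall w, Bc w -> V w = Ystop w}.
Proof.
move=> [nu_st t_nu] condV; have GBc : Gtau t Bc by exact: progressive_enlargement_tau_le.
have mBc := Gt_measurable GBc.
have condYstop : cond_exp_on P Bc (Gtau t) Ystop Ystop.
  split; first exact: G_measurable_Ystop.
  by split=> //; exact: integrableS integrable_Ystop.
apply: (cond_exp_on_unique sGt Gt_measurable mBc _ condYstop).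
apply: (cond_exp_on_ae_eq Gt_measurable mBc
  (measurable_payoff_progressive_enlargement nu_st) measurable_Ystop).
  by apply: filterS t_nu => w t_nu_w /= tau_t; rewrite /Ystop tau_t mulr1
    payoff_after_tau // (leq_trans tau_t t_nu_w).
by have := cond_exp_on_setI sGt Gt_measurable GBc condV.
Qed.

Lemma cond_exp_on_before_tau nu V1 V2 :
  cond_exp_on P setT (Gtau t) (pay nu) V1 -> cond_exp_on P B (G t) (pay nu) V2 ->
  {ae P, forall w, B w -> V1 w = V2 w}.
Proof.
move=> condV1 [GV2 [intV2 eqV2]]; have GB := progressive_enlargement_before.
apply: (cond_exp_on_unique sGt Gt_measurable (Gt_measurable GB)
  (cond_exp_on_setI sGt Gt_measurable GB condV1)).
split; first exact: G_measurableS (@sub_progressive_enlargement _ _ G tau t) GV2.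
split=> // A GtA.
have [A' GA' ->] := progressive_enlargement_trace (filtration_sigma_algebra filtG (ltnW tT)) GtA.
exact: eqV2.
Qed.

Let integrable_pay S nu : measurable S -> stopping_time T G nu ->
  P.-integrable S (EFin \o pay nu).
Proof.
move=> mS nu_st; apply: integrableS (subsetT _) _ => //.
exact: (integrable_stopping_payoff filtG adaptX adaptY intX intY tauT measurable_tau_eq).
Qed.

Lemma optimal_progressive_enlargement nuh nu :
  stopping_time_ge T G t nuh -> optimal_from P T G X Y tau t nuh -> stopping_time_ge T G t nu ->
  forall A, Gtau t A -> \int[P]_(x in A) pay nu x <= \int[P]_(x in A) pay nuh x.
Proof.
move=> [nuh_st nuh_ge] nuh_opt [nu_st nu_ge] A GtA.
have [A' GA' eqA] := progressive_enlargement_trace (filtration_sigma_algebra filtG (ltnW tT)) GtA.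
have mB := Gt_measurable progressive_enlargement_before.
have int_diff := integrableB measurableT (integrable_pay measurableT nuh_st)
  (integrable_pay measurableT nu_st).
have before S : measurable S ->
    \int[P]_(x in S) (pay nuh x - pay nu x) = \int[P]_(x in S `&` B) (pay nuh x - pay nu x).
  move=> mS; rewrite (Rintegral_setID mS mB int_diff).
  suff -> : \int[P]_(x in S `\` B) (pay nuh x - pay nu x) = \int[P]_(x in S `\` B) 0.
    by rewrite Rintegral_cst ?mul0r ?addr0 //; exact: measurableD.
  apply: eq_Rintegral => w /set_mem [_ /negP]; rewrite -leqNgt => tau_t.
  by rewrite !payoff_after_tau ?subrr // (leq_trans tau_t).
have mA := Gt_measurable GtA; have mA' := filtration_measurable filtG (ltnW tT) GA'.
rewrite -subr_ge0 -RintegralB ?integrable_pay // before // eqA -before //.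
by rewrite RintegralB ?integrable_pay // subr_ge0; exact: nuh_opt.
Qed.

Section ess_sup_identification.
Variables (V1 : (Omega -> nat) -> Omega -> R) (S1 : Omega -> \bar R).
Hypotheses (condV1 : forall nu, stopping_time_from P T Gtau t nu ->
     cond_exp_on P setT (Gtau t) (pay nu) (V1 nu))
  (supS1 : ess_sup_on P setT
     [set EFin \o V1 nu | nu in stopping_time_from P T Gtau t] S1).

Lemma cond_exp_reduce nu : stopping_time_from P T Gtau t nu ->
  exists nu', stopping_time_ge T G t nu' /\ {ae P, forall w, V1 nu w = V1 nu' w}.
Proof.
move=> nu_from; have [nu' [nu'_ge pay_eq]] := stopping_time_from_reduce nu_from.
have nu'_from := stopping_time_from_progressive_enlargement (stopping_time_from_ge nu'_ge).
exists nu'; split => //.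
have condV1' : cond_exp_on P setT (Gtau t) (pay nu') (V1 nu).
  apply: (cond_exp_on_ae_eq Gt_measurable measurableT); last exact: condV1.
  - exact: measurable_payoff_progressive_enlargement nu_from.1.
  - exact: measurable_payoff_progressive_enlargement nu'_from.1.
  - by apply: filterS pay_eq => w ->.
have := cond_exp_on_unique sGt Gt_measurable measurableT condV1' (condV1 nu'_from).
by apply: filterS => w; apply.
Qed.

Section optimal.
Variables (nuh : Omega -> nat) (W : Omega -> R).
Hypotheses (nuh_ge : stopping_time_ge T G t nuh) (nuh_opt : optimal_from P T G X Y tau t nuh)
  (condW : cond_exp_on P setT (Gtau t) (pay nuh) W).

Let nuh_from : stopping_time_from P T Gtau t nuh.
Proof. exact/stopping_time_from_progressive_enlargement/stopping_time_from_ge. Qed.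

Lemma cond_exp_le_optimal nu : stopping_time_from P T Gtau t nu ->
  {ae P, forall w, V1 nu w <= W w}.
Proof.
move=> nu_from; have [nu' [nu'_ge V1_eq]] := cond_exp_reduce nu_from.
have nu'_from := stopping_time_from_progressive_enlargement (stopping_time_from_ge nu'_ge).
have [GV1 [intV1 eqV1]] := condV1 nu'_from; have [GW [intW eqW]] := condW.
have V1'_le : {ae P, forall w, setT w -> V1 nu' w <= W w}.
  apply: (ae_le_of_integral_le sGt Gt_measurable measurableT GV1 GW intV1 intW) => A GtA.
  have mA := Gt_measurable GtA.
  have int_nuh := integrable_pay mA nuh_ge.1; have int_nu' := integrable_pay mA nu'_ge.1.
  rewrite eqV1 // eqW // setIT -!EFin_Rintegral // lee_fin.
  exact: optimal_progressive_enlargement nuh_ge nuh_opt nu'_ge A GtA.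
by apply: filterS2 V1_eq V1'_le => w -> /(_ I).
Qed.

Lemma cond_exp_optimal_ess_sup : {ae P, forall w, (W w)%:E = S1 w}.
Proof.
have [mS1 [S1_ub S1_lub]] := supS1.
have W_eq := cond_exp_on_unique sGt Gt_measurable measurableT condW (condV1 nuh_from).
have V1_le_S1 := S1_ub _ (ex_intro2 _ _ nuh nuh_from erefl).
have S1_le : {ae P, forall w, setT w -> (S1 w <= (W w)%:E)%E}.
  apply: S1_lub; first exact/measurable_EFinP/(G_measurable_measurable_fun Gt_measurable condW.1).
  move=> _ [nu nu_from <-].
  by apply: filterS (cond_exp_le_optimal nu_from) => w V1_le _ /=; rewrite lee_fin.
apply: filterS3 W_eq V1_le_S1 S1_le => w W_eqw V1_le S1_lew.
by apply/le_anti; rewrite S1_lew //= W_eqw // V1_le.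
Qed.

End optimal.

Section decomposition.
Variables (V2 : (Omega -> nat) -> Omega -> R) (S2 : Omega -> \bar R).
Hypotheses (condV2 : forall nu, stopping_time_from P T G t nu ->
     cond_exp_on P B (G t) (pay nu) (V2 nu))
  (supS2 : ess_sup_on P B [set EFin \o V2 nu | nu in stopping_time_from P T G t] S2).

Let stop_at_t : stopping_time_from P T Gtau t (fun=> t).
Proof.
apply/stopping_time_from_progressive_enlargement/stopping_time_from_ge.
by split=> //; exact: (stopping_time_cst filtG (ltnW tT)).
Qed.

Let rhs w := ((Ystop w)%:E + ((t < tau w)%N)%:R%:E * S2 w)%E.

Let rhs_after w : (tau w <= t)%N -> rhs w = (Ystop w)%:E.
Proof. by rewrite /rhs ltnNge => ->; rewrite mul0e adde0. Qed.

Let rhs_before w : (t < tau w)%N -> rhs w = S2 w.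
Proof. by move=> t_tau; rewrite /rhs /Ystop leqNgt t_tau /= mulr0 add0e mul1e. Qed.

Let measurable_rhs : measurable_fun setT rhs.
Proof.
apply: emeasurable_funD; first exact/measurable_EFinP/measurable_Ystop.
apply: emeasurable_funM supS2.1; apply/measurable_EFinP.
rewrite (_ : (fun w => _) = \1_B).
  by apply: measurable_indic; exact: Gt_measurable progressive_enlargement_before.
apply/funext => w; rewrite indicE; case: (boolP (t < tau w)%N) => t_tau.
  by rewrite mem_set.
by rewrite memNset //; apply/negP.
Qed.

Let ess_sup_le_rhs : {ae P, forall w, setT w -> (S1 w <= rhs w)%E}.
Proof.
apply: supS1.2.2 measurable_rhs _ => _ [nu nu_from <-].
have [nu' [nu'_ge V1_eq]] := cond_exp_reduce nu_from.
have nu'_from := stopping_time_from_ge nu'_ge.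
have nu'_from' := stopping_time_from_progressive_enlargement nu'_from.
have V1'_eq := cond_exp_on_before_tau (condV1 nu'_from') (condV2 nu'_from).
have V2_le := supS2.2.1 _ (ex_intro2 _ _ nu' nu'_from erefl).
have before : {ae P, forall w, B w -> ((V1 nu w)%:E <= S2 w)%E}.
  apply: filterS3 V1_eq V1'_eq V2_le => w -> V1'_eqw V2_lew Bw.
  by rewrite V1'_eqw //; exact: V2_lew.
apply: filterS2 (cond_exp_on_after_tau nu_from (condV1 nu_from)) before => w after before' _ /=.
have [tau_t|t_tau] := leqP (tau w) t; first by rewrite rhs_after // after.
by rewrite rhs_before // before'.
Qed.

Let rhs_le_ess_sup : {ae P, forall w, (rhs w <= S1 w)%E}.
Proof.
have [mS1 [S1_ub S1_lub]] := supS1.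
have S2_le : {ae P, forall w, B w -> (S2 w <= S1 w)%E}.
  apply: supS2.2.2 mS1 _ => _ [nu nu_from <-].
  have nu_from' := stopping_time_from_progressive_enlargement nu_from.
  have V1_eq := cond_exp_on_before_tau (condV1 nu_from') (condV2 nu_from).
  have V1_le := S1_ub _ (ex_intro2 _ _ nu nu_from' erefl).
  by apply: filterS2 V1_eq V1_le => w V1_eqw V1_lew Bw /=; rewrite -V1_eqw //; exact: V1_lew.
have Ystop_le := cond_exp_on_after_tau stop_at_t (condV1 stop_at_t).
have V1_le_S1 := S1_ub _ (ex_intro2 _ _ _ stop_at_t erefl).
apply: filterS3 S2_le Ystop_le V1_le_S1 => w S2_lew Ystop_eq V1_le.
have [tau_t|t_tau] := leqP (tau w) t.
  by rewrite rhs_after // -Ystop_eq //; exact: V1_le.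
by rewrite rhs_before //; exact: S2_lew.
Qed.

Lemma ess_sup_decomposition :
  {ae P, forall w, S1 w = ((Ystop w)%:E + ((t < tau w)%N)%:R%:E * S2 w)%E}.
Proof.
apply: filterS2 ess_sup_le_rhs rhs_le_ess_sup => w S1_le rhs_le.
by apply/le_anti; rewrite S1_le // rhs_le.
Qed.

End decomposition.
End ess_sup_identification.

End enlargement.

Theorem theorem1 (d : measure_display) (Omega : measurableType d) (R : realType)
    (P : probability Omega R) (T : nat) (F G : nat -> set (set Omega))
    (X2 Y2 : nat -> Omega -> R) (tau : Omega -> nat) (t : nat) :
  (0 < T)%N ->
  filtration T F -> filtration T G ->
  (forall s, (s <= T)%N -> G s `<=` F s) ->
  adapted T G X2 -> adapted T G Y2 ->
  P.-integrable setT (EFin \o maxabs T X2) ->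
  P.-integrable setT (EFin \o maxabs T Y2) ->
  stopping_time T F tau ->
  (t < T)%N ->
  exists nuhat : Omega -> nat,
    stopping_time_from P T G t nuhat /\
    forall (W : Omega -> R)
           (V1 : (Omega -> nat) -> Omega -> R) (S1 : Omega -> \bar R)
           (V2 : (Omega -> nat) -> Omega -> R) (S2 : Omega -> \bar R),
      cond_exp_on P setT (progressive_enlargement G tau t) (payoff X2 Y2 tau nuhat) W ->
      (forall nu, stopping_time_from P T (progressive_enlargement G tau) t nu ->
         cond_exp_on P setT (progressive_enlargement G tau t) (payoff X2 Y2 tau nu) (V1 nu)) ->
      ess_sup_on P setT
        [set EFin \o V1 nu | nu in stopping_time_from P T (progressive_enlargement G tau) t] S1 ->
      (forall nu, stopping_time_from P T G t nu ->
         cond_exp_on P [set w | (t < tau w)%N] (G t) (payoff X2 Y2 tau nu) (V2 nu)) ->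
      ess_sup_on P [set w | (t < tau w)%N]
        [set EFin \o V2 nu | nu in stopping_time_from P T G t] S2 ->
      {ae P, forall w, (W w)%:E = S1 w} /\
      {ae P, forall w, S1 w =
         ((Y2 (tau w) w * ((tau w <= t)%N)%:R)%:E +
          ((t < tau w)%N)%:R%:E * S2 w)%E}.
Proof.
move=> _ filtF filtG _ adaptX adaptY intX intY tau_st tT.
have [nuh [nuh_ge nuh_opt]] := exists_optimal filtG adaptX adaptY intX intY tau_st.1
  (measurable_stopping_time_eq filtF tau_st) (ltnW tT).
exists nuh; split; first exact: stopping_time_from_ge nuh_ge.
move=> W V1 S1 V2 S2 condW condV1 supS1 condV2 supS2; split.
  exact: (cond_exp_optimal_ess_sup filtF filtG adaptX adaptY intX intY tau_st tT
    condV1 supS1 nuh_ge nuh_opt condW).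
exact: (ess_sup_decomposition filtF filtG adaptX adaptY intY tau_st tT
  condV1 supS1 condV2 supS2).
Qed.
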